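(* Every Sasakian Lie algebroid is $K$-contact; that is, if $E$ is a contact Riemannian Lie algebroid whose associated almost contact Riemannian structure $(F_E,\xi,\eta,g_E)$ is normal, then $\xi$ is a Killing section of $g_E$.
   Context: A Lie algebroid $(E,\rho_E,[\cdot,\cdot]_E)$ over $M$ is a vector bundle with anchor $\rho_E:E\to TM$ and Lie bracket on $\Gamma(E)$ with $[s_1,fs_2]_E=f[s_1,s_2]_E+\rho_E(s_1)(f)s_2$. For a 1-form $\eta$, $(d_E\eta)(s_1,s_2)=\frac12\{\rho_E(s_1)(\eta(s_2))-\rho_E(s_2)(\eta(s_1))-\eta([s_1,s_2]_E)\}$. For $E$ of rank $2m+1$, an almost contact Riemannian structure $(F_E,\xi,\eta,g_E)$: endomorphism $F_E$, $\xi\in\Gamma(E)$, $\eta\in\Gamma(E^* )$, bundle metric $g_E$ with $F_E^2=-I_E+\eta\otimes\xi$, $\eta(\xi)=1$, $g_E(F_Es_1,F_Es_2)=g_E(s_1,s_2)-\eta(s_1)\eta(s_2)$; fundamental form $\Omega_E(s_1,s_2)=g_E(s_1,F_Es_2)$. $E$ is contact Riemannian if also $\eta\wedge(d_E\eta)^m$ vanishes nowhere and $d_E\eta=\Omega_E$. The structure is normal if $N_{F_E}+2\,d_E\eta\otimes\xi=0$, where $N_{F_E}(s_1,s_2)=[F_Es_1,F_Es_2]_E-F_E[F_Es_1,s_2]_E-F_E[s_1,F_Es_2]_E+F_E^2[s_1,s_2]_E$. A Sasakian Lie algebroid is a contact Riemannian Lie algebroid whose structure is normal. $\xi$ is Killing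 if $\rho_E(\xi)(g_E(s_1,s_2))-g_E([\xi,s_1]_E,s_2)-g_E(s_1,[\xi,s_2]_E)=0$ for all $s_1,s_2$; $K$-contact means contact Riemannian with $\xi$ Killing. *)

(* A Lie algebroid is modelled algebraically, at the level of
   sections: A = ring of (smooth) functions on M, an R-algebra; E = module of
   sections Gamma(E) over A; points of M = R-algebra characters A -> R. *)
From HB Require Import structures.
From mathcomp Require Import all_boot all_order all_fingroup all_algebra.
Set Implicit Arguments. Unset Strict Implicit. Unset Printing Implicit Defensive.
Import Order.TTheory GRing.Theory Num.Theory.
Local Open Scope ring_scope.

Section LieAlgebroid.
Variables (R : realFieldType) (A : comAlgType R) (E : lmodType A).

Definition is_lie_algebroid (rho : E -> A -> A) (br : E -> E -> E) : Prop :=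
  [/\ [/\
      (forall (a : A) (s t : E) (f : A), rho (a *: s + t) f = a * rho s f + rho t f),
      (forall (s : E) (r : R) (f g : A), rho s (r *: f + g) = r *: rho s f + rho s g),
      (forall (s : E) (f g : A), rho s (f * g) = rho s f * g + f * rho s g) &
      (forall (r : R) (s1 s2 t : E),
          br (r%:A *: s1 + s2) t = r%:A *: br s1 t + br s2 t)],
      (forall s t : E, br s t = - br t s) &
      [/\ (forall s1 s2 s3 : E,
            br s1 (br s2 s3) + br s2 (br s3 s1) + br s3 (br s1 s2) = 0),
          (forall (s1 s2 : E) (f : A), br s1 (f *: s2) = f *: br s1 s2 + rho s1 f *: s2) &
          (forall (s1 s2 : E) (f : A),
             rho (br s1 s2) f = rho s1 (rho s2 f) - rho s2 (rho s1 f))]].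

Definition tensorial_endo (F : E -> E) : Prop :=
  forall (a : A) (s t : E), F (a *: s + t) = a *: F s + F t.

Definition tensorial_form (eta : E -> A) : Prop :=
  forall (a : A) (s t : E), eta (a *: s + t) = a * eta s + eta t.

Definition point := {lrmorphism A -> R^o}.

Definition bundle_metric (g : E -> E -> A) : Prop :=
  [/\ (forall (a : A) (s t u : E), g (a *: s + t) u = a * g s u + g t u),
      (forall s t : E, g s t = g t s) &
      (forall (x : point) (s : E), 0 <= x (g s s))].

Definition dE (rho : E -> A -> A) (br : E -> E -> E) (eta : E -> A) (s1 s2 : E) : A :=
  (2^-1 : R)%:A * (rho s1 (eta s2) - rho s2 (eta s1) - eta (br s1 s2)).

Definition fundamental_form (F : E -> E) (g : E -> E -> A) (s1 s2 : E) : A :=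
  g s1 (F s2).

Definition almost_contact_riemannian (F : E -> E) (xi : E) (eta : E -> A)
    (g : E -> E -> A) : Prop :=
  [/\ [/\ tensorial_endo F, tensorial_form eta & bundle_metric g],
      (forall s, F (F s) = - s + eta s *: xi),
      eta xi = 1 &
      (forall s1 s2, g (F s1) (F s2) = g s1 s2 - eta s1 * eta s2)].

(* (eta /\ (d_E eta)^m)(s_0,...,s_2m), up to the (irrelevant, nonzero)
   normalising constant of the wedge product *)
Definition eta_wedge_deta_pow (rho : E -> A -> A) (br : E -> E -> E) (eta : E -> A)
    (m : nat) (s : 'I_(m.*2.+1) -> E) : A :=
  \sum_(sigma : 'S_(m.*2.+1))
     (-1) ^+ (odd_perm sigma) *
     (eta (s (sigma ord0)) *
      \prod_(i < m) dE rho br eta (s (sigma (inord i.*2.+1))) (s (sigma (inord i.*2.+2)))).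

Definition vanishes_nowhere (m : nat) (omega : ('I_(m.*2.+1) -> E) -> A) : Prop :=
  forall x : point, exists s : 'I_(m.*2.+1) -> E, x (omega s) != 0.

Definition contact_riemannian (m : nat) (rho : E -> A -> A) (br : E -> E -> E)
    (F : E -> E) (xi : E) (eta : E -> A) (g : E -> E -> A) : Prop :=
  [/\ almost_contact_riemannian F xi eta g,
      vanishes_nowhere (eta_wedge_deta_pow rho br eta (m:=m)) &
      (forall s1 s2, dE rho br eta s1 s2 = fundamental_form F g s1 s2)].

Definition nijenhuis (br : E -> E -> E) (F : E -> E) (s1 s2 : E) : E :=
  br (F s1) (F s2) - F (br (F s1) s2) - F (br s1 (F s2)) + F (F (br s1 s2)).

Definition normal (rho : E -> A -> A) (br : E -> E -> E) (F : E -> E) (xi : E)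
    (eta : E -> A) : Prop :=
  forall s1 s2, nijenhuis br F s1 s2 + (2%:R * dE rho br eta s1 s2) *: xi = 0.

Definition sasakian (m : nat) rho br F xi eta g : Prop :=
  contact_riemannian m rho br F xi eta g /\ normal rho br F xi eta.

Definition killing (rho : E -> A -> A) (br : E -> E -> E) (g : E -> E -> A) (xi : E) : Prop :=
  forall s1 s2, rho xi (g s1 s2) - g (br xi s1) s2 - g s1 (br xi s2) = 0.

Definition K_contact (m : nat) rho br F xi eta g : Prop :=
  contact_riemannian m rho br F xi eta g /\ killing rho br g xi.

End LieAlgebroid.

(* Normality makes the Reeb section xi an infinitesimal automorphism of F,
   while the contact condition d_E eta = Omega makes it preserve eta and
   hence d_E eta = Omega (d_E commutes with the Lie derivative along xi, by
   Jacobi and the anchor being a bracket morphism).  Since xi preserves F and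
   Omega(s, t) = g(s, F t), it preserves g on pairs whose second argument lies
   in the image of F; as g(s, xi) = eta(s) it also preserves g(s, xi).  Every
   section splits as t = - F (F t) + eta(t) xi, so xi is Killing. *)
From Pilot Require Import Defs.
From mathcomp Require Import all_boot all_order all_fingroup all_algebra.
From mathcomp Require Import ring.
Set Implicit Arguments.
Unset Strict Implicit.
Unset Printing Implicit Defensive.
Import GRing.Theory Num.Theory.
Local Open Scope ring_scope.

Section AdditiveMorphism.
Variables (U V : zmodType) (f : U -> V).
Hypothesis fD : {morph f : x y / x + y}.

Lemma morph_add0 : f 0 = 0.
Proof. by apply: (addrI (f 0)); rewrite -fD !addr0. Qed.

Lemma morph_addN x : f (- x) = - f x.
Proof. by apply/esym/addr0_eq; rewrite -fD subrr morph_add0. Qed.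

End AdditiveMorphism.

Section Tensorial.
Variables (R : realFieldType) (A : comAlgType R) (E : lmodType A).

Lemma mul_half_two : (2^-1 : R)%:A * 2%:R = 1 :> A.
Proof.
by rewrite mulr_algl -scaler_nat scalerA mulVf ?scale1r // pnatr_eq0.
Qed.

Lemma tensorial_endoD (F : E -> E) : tensorial_endo F -> {morph F : s t / s + t}.
Proof. by move=> hF s t; rewrite -[s]scale1r hF !scale1r. Qed.

Lemma tensorial_endoZ (F : E -> E) a s : tensorial_endo F -> F (a *: s) = a *: F s.
Proof.
by move=> hF; rewrite -[a *: s]addr0 hF (morph_add0 (tensorial_endoD hF)) addr0.
Qed.

Lemma tensorial_formD (eta : E -> A) : tensorial_form eta -> {morph eta : s t / s + t}.
Proof. by move=> heta s t; rewrite -[s]scale1r heta scale1r mul1r. Qed.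

Lemma tensorial_formZ (eta : E -> A) a s : tensorial_form eta -> eta (a *: s) = a * eta s.
Proof.
by move=> heta; rewrite -[a *: s]addr0 heta (morph_add0 (tensorial_formD heta)) addr0.
Qed.

Section BundleMetric.
Variables (g : E -> E -> A).
Hypothesis hg : bundle_metric g.

Lemma bundle_metricC s t : g s t = g t s.
Proof. by case: hg. Qed.

Lemma bundle_metricDr u : {morph g u : s t / s + t}.
Proof.
move=> s t; case: hg => gL gC _.
by rewrite gC -[s]scale1r gL scale1r mul1r !(gC u).
Qed.

Lemma bundle_metricZl a s u : g (a *: s) u = a * g s u.
Proof.
case: hg => gL gC _; rewrite -[a *: s]addr0 gL [g 0 u]gC.
by rewrite (morph_add0 (bundle_metricDr u)) addr0.
Qed.

Lemma bundle_metricZr a s u : g u (a *: s) = a * g u s.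
Proof. by rewrite bundle_metricC bundle_metricZl bundle_metricC. Qed.

End BundleMetric.

Section LieAlgebroid.
Variables (rho : E -> A -> A) (br : E -> E -> E).
Hypothesis hLie : is_lie_algebroid rho br.

Lemma bracket_skew s t : br s t = - br t s.
Proof. by case: hLie. Qed.

Lemma bracket_leibniz s1 s2 f : br s1 (f *: s2) = f *: br s1 s2 + rho s1 f *: s2.
Proof. by case: hLie => _ _ []. Qed.

Lemma anchor_bracket s1 s2 f : rho (br s1 s2) f = rho s1 (rho s2 f) - rho s2 (rho s1 f).
Proof. by case: hLie => _ _ []. Qed.

Lemma anchor_mul s f1 f2 : rho s (f1 * f2) = rho s f1 * f2 + f1 * rho s f2.
Proof. by case: hLie => -[]. Qed.

Lemma bracketDl t : {morph br^~ t : s1 s2 / s1 + s2}.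
Proof. by case: hLie => -[_ _ _ brL] _ _ s1 s2; have := brL 1 s1 s2 t; rewrite !scale1r. Qed.

Lemma bracket0l t : br 0 t = 0.
Proof. exact: morph_add0 (bracketDl t). Qed.

Lemma bracketDr t : {morph br t : s1 s2 / s1 + s2}.
Proof. by move=> s1 s2; rewrite bracket_skew bracketDl opprD -!bracket_skew. Qed.

Lemma bracketii s : br s s = 0.
Proof.
have two_bss : br s s *+ 2 = 0 by rewrite mulr2n {1}bracket_skew addNr.
by rewrite -[br s s]scale1r -mul_half_two -scalerA scaler_nat two_bss scaler0.
Qed.

Lemma bracket_derivation s s1 s2 : br s (br s1 s2) = br (br s s1) s2 + br s1 (br s s2).
Proof.
case: hLie => _ _ [jacobi _ _]; move: (jacobi s s1 s2).
rewrite (bracket_skew s2 s) (morph_addN (bracketDr _)) (bracket_skew s2 (br s s1)).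
by rewrite -addrA -opprD => /subr0_eq ->; rewrite addrC.
Qed.

Lemma anchorD s : {morph rho s : f1 f2 / f1 + f2}.
Proof. by case: hLie => -[_ rhoL _ _] _ _ f1 f2; have := rhoL s 1 f1 f2; rewrite !scale1r. Qed.

Lemma anchorZ s (r : R) f : rho s (r%:A * f) = r%:A * rho s f.
Proof.
case: hLie => -[_ rhoL _ _] _ _.
by rewrite !mulr_algl -[_ *: f]addr0 rhoL (morph_add0 (anchorD s)) addr0.
Qed.

Lemma anchor1 s : rho s 1 = 0.
Proof. by apply: (addIr (rho s 1)); rewrite add0r -{3}(mulr1 1) anchor_mul mulr1 mul1r. Qed.

Section Differential.
Variables (eta : E -> A).
Hypothesis heta : tensorial_form eta.

Lemma dEii s : dE rho br eta s s = 0.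
Proof. by rewrite /dE subrr bracketii (morph_add0 (tensorial_formD heta)) subrr mulr0. Qed.

Lemma dE_invariant xi :
    (forall s, rho xi (eta s) = eta (br xi s)) ->
  forall s1 s2, rho xi (dE rho br eta s1 s2) =
                dE rho br eta (br xi s1) s2 + dE rho br eta s1 (br xi s2).
Proof.
move=> Leta s1 s2; rewrite /dE anchorZ -mulrDr; congr (_ * _).
rewrite !anchor_bracket -!Leta !anchorD !(morph_addN (anchorD _)) Leta.
by rewrite bracket_derivation (tensorial_formD heta); ring.
Qed.

End Differential.

Section ContactRiemannian.
Variables (F : E -> E) (xi : E) (eta : E -> A) (g : E -> E -> A).
Hypothesis hAC : almost_contact_riemannian F xi eta g.
Hypothesis hdE : forall s1 s2, dE rho br eta s1 s2 = fundamental_form F g s1 s2.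

Let hF : tensorial_endo F. Proof. by case: hAC => -[]. Qed.
Let heta : tensorial_form eta. Proof. by case: hAC => -[]. Qed.
Let hg : bundle_metric g. Proof. by case: hAC => -[]. Qed.
Let FF s : F (F s) = - s + eta s *: xi. Proof. by case: hAC. Qed.
Let eta_xi : eta xi = 1. Proof. by case: hAC. Qed.
Let gFF s1 s2 : g (F s1) (F s2) = g s1 s2 - eta s1 * eta s2. Proof. by case: hAC. Qed.

Let F0 : F 0 = 0. Proof. exact: morph_add0 (tensorial_endoD hF). Qed.

(* F^2 xi = 0 only gives F xi = a xi with a^2 = 0; the contact condition
   Omega(xi, xi) = d_E eta(xi, xi) = 0 forces a = 0. *)
Lemma F_xi : F xi = 0.
Proof.
set a := eta (F xi).
have Fxi_a : F xi = a *: xi.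
  have FFxi : F (F xi) = 0 by rewrite FF eta_xi scale1r addNr.
  by have := FF (F xi); rewrite FFxi F0 => /esym/addr0_eq; rewrite opprK.
have a_gxx : a * g xi xi = 0.
  by rewrite -bundle_metricZr // -Fxi_a -[RHS](dEii heta xi) hdE.
have gxx : g xi xi = 1.
  apply/subr0_eq; rewrite -[1]mulr1 -eta_xi -gFF Fxi_a.
  by rewrite bundle_metricZl // bundle_metricZr // a_gxx mulr0.
by rewrite Fxi_a -[a]mulr1 -gxx a_gxx scale0r.
Qed.

Lemma F_cube s : F (F (F s)) = - F s.
Proof.
rewrite [F (F s)]FF (tensorial_endoD hF) (morph_addN (tensorial_endoD hF)).
by rewrite tensorial_endoZ // F_xi scaler0 addr0.
Qed.

Lemma eta_F s : eta (F s) = 0.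
Proof.
have eta_Fs_xi : eta (F s) *: xi = 0.
  by apply: (addrI (- F s)); rewrite -FF F_cube addr0.
by rewrite -[eta (F s)]mulr1 -eta_xi -tensorial_formZ // eta_Fs_xi
  (morph_add0 (tensorial_formD heta)).
Qed.

Lemma g_xi s : g xi s = eta s.
Proof.
have g0 : g 0 (F s) = 0 by rewrite -(scale0r (0 : E)) bundle_metricZl // mul0r.
by move: (gFF xi s); rewrite F_xi g0 eta_xi mul1r => /esym/subr0_eq.
Qed.

Lemma dE_xi s : dE rho br eta xi s = 0.
Proof. by rewrite hdE /fundamental_form g_xi eta_F. Qed.

Lemma lie_xi_eta s : rho xi (eta s) = eta (br xi s).
Proof.
apply/subr0_eq; have := dE_xi s; rewrite /dE eta_xi anchor1 subr0 => half_eq0.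
by rewrite -[LHS]mul1r -mul_half_two mulrAC half_eq0 mul0r.
Qed.

Lemma lie_xi_F_of_normal : Defs.normal rho br F xi eta ->
  forall s, br xi (F s) = F (br xi s).
Proof.
move=> hN s; have FF_eq : F (br xi (F s)) = F (F (br xi s)).
  move: (hN xi s); rewrite /nijenhuis F_xi !bracket0l F0.
  by rewrite subrr sub0r dE_xi mulr0 scale0r addr0 addrC => /subr0_eq.
apply: oppr_inj; rewrite -F_cube -FF_eq FF -lie_xi_eta eta_F.
by rewrite (morph_add0 (anchorD _)) scale0r addr0.
Qed.

Lemma killing_of_lie_xi_F : (forall s, br xi (F s) = F (br xi s)) ->
  killing rho br g xi.
Proof.
move=> LF s1 t.
pose K u := rho xi (g s1 u) - g (br xi s1) u - g s1 (br xi u).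
have KD : {morph K : u v / u + v}.
  move=> u v; rewrite /K bracketDr !bundle_metricDr // anchorD; ring.
have KF u : K (F u) = 0.
  rewrite /K LF -!/(fundamental_form F g _ _) -!hdE dE_invariant //; last exact: lie_xi_eta.
  by ring.
have Kxi c : K (c *: xi) = 0.
  rewrite /K bracket_leibniz bracketii scaler0 add0r !bundle_metricZr //.
  by rewrite ![g _ xi]bundle_metricC // !g_xi anchor_mul lie_xi_eta; ring.
change (K t = 0).
have -> : t = - F (F t) + eta t *: xi by rewrite FF opprD opprK subrK.
by rewrite KD (morph_addN KD) KF oppr0 add0r Kxi.
Qed.

End ContactRiemannian.
End LieAlgebroid.
End Tensorial.

Theorem theorem4p2 (R : realFieldType) (A : comAlgType R) (E : lmodType A)
    (m : nat) (rho : E -> A -> A) (br : E -> E -> E)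
    (F : E -> E) (xi : E) (eta : E -> A) (g : E -> E -> A) :
  is_lie_algebroid rho br ->
  sasakian m rho br F xi eta g ->
  K_contact m rho br F xi eta g.
Proof.
move=> hLie [hC hN]; split; first exact: hC.
case: hC => hAC _ hdE.
exact (killing_of_lie_xi_F hLie hAC hdE (lie_xi_F_of_normal hLie hAC hdE hN)).
Qed.
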